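(* Let $N\in\mathbb{N}$ and $a\in\mathbb{N}$. Then there exist $p,c,d\in\mathbb{N}$ such that $\gcd(a,p)=\gcd(a,c)=\gcd(c,d)=1$, $pc\equiv pd\equiv 1\pmod a$, $p>N$, $pc>aN$, and $d>\max\{(a-1)pc+a(N-1),\ ac\}$. *)

From mathcomp Require Import all_boot.

(* Take p = c = a N + 1, which is 1 mod a, and choose d beyond the required
   bound with d = 1 both mod a and mod c (e.g. d = k a c + 1). Every
   congruence then follows from 1 * 1 = 1, and every coprimality condition
   from the fact that a number congruent to 1 modulo m is coprime to m. *)
From mathcomp Require Import all_boot.

Lemma eq1_mod_coprime m n : n = 1 %[mod m] -> coprime m n.
Proof. by move=> n1; rewrite -coprime_modr n1 coprime_modr coprimen1. Qed.

Lemma muln_eq1_mod d m n :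
  m = 1 %[mod d] -> n = 1 %[mod d] -> m * n = 1 %[mod d].
Proof. by move=> m1 n1; rewrite -modnMm m1 n1 modnMm. Qed.

Lemma exists_gt_eq1_mod2 a c B : 0 < a -> 0 < c ->
  exists d, [/\ B < d, d = 1 %[mod a] & d = 1 %[mod c]].
Proof.
move=> a_gt0 c_gt0; exists (B * (a * c) + 1); split.
- by rewrite addn1 ltnS leq_pmulr ?muln_gt0 ?a_gt0.
- by rewrite mulnA mulnAC modnMDl.
- by rewrite mulnA modnMDl.
Qed.

Theorem lemma4p1 (N a : nat) (ha : 0 < a) :
  exists p c d : nat,
    [/\ gcdn a p = 1, gcdn a c = 1 & gcdn c d = 1] /\
    [/\ p * c = 1 %[mod a], p * d = 1 %[mod a],
        N < p, a * N < p * c &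
        maxn ((a - 1) * p * c + a * (N - 1)) (a * c) < d].
Proof.
pose p := (a * N).+1.
have p1 : p = 1 %[mod a] by rewrite /p -addn1 mulnC modnMDl.
have [d [d_big d1a d1p]] :=
  exists_gt_eq1_mod2 a p (maxn ((a - 1) * p * p + a * (N - 1)) (a * p)) ha (ltn0Sn _).
exists p, p, d; split; first by split; apply/eqP; apply: eq1_mod_coprime.
have p_gt0 : 0 < p by [].
split.
- exact: muln_eq1_mod.
- exact: muln_eq1_mod.
- by rewrite ltnS leq_pmull.
- by rewrite (leq_trans (ltnSn _)) ?leq_pmulr.
- exact: d_big.
Qed.
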